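(* Let $\alpha,\beta,\gamma_1,\gamma_2,x$ be real numbers, $\lambda_1,\lambda_2$ nonnegative integers and $n$ a nonnegative integer. Then $$\sum_{k=0}^{n}\binom{n}{k}A_{k}^{\lambda_{1},x}(\alpha,\beta,\alpha+\beta+\gamma_{1})\,A_{n-k}^{\lambda_{2},x}(\alpha,\beta,\gamma_{2})=A_{n}^{\lambda_{1}+\lambda_{2},x}(\alpha,\beta,\alpha+\beta+\gamma_{1}+\gamma_{2}).$$
   Context: For a number $t$ and $\alpha$, the generalised factorial is $(t|\alpha)_n=\prod_{j=0}^{n-1}(t-j\alpha)$ for $n\ge 1$ and $(t|\alpha)_0=1$. For parameters $\alpha,\beta,\gamma$, the generalised Stirling numbers $S(n,k,\alpha,\beta,\gamma)$ ($0\le k\le n$) are defined by the polynomial identity $(t|\alpha)_n=\sum_{k=0}^{n}S(n,k,\alpha,\beta,\gamma)\,(t-\gamma|\beta)_k$ in the variable $t$. For a nonnegative integer $\lambda$ put $\binom{k+\lambda-1}{k}=\lambda(\lambda+1)\cdots(\lambda+k-1)/k!$ (equal to $1$ for $k=0$). Define $$A^{\lambda,x}_n(\alpha,\beta,\gamma)=\sum_{k=0}^{n}\binom{k+\lambda-1}{k}(-1)^{n+k}\beta^k k!\,S(n,k,\alpha,-\beta,-\gamma)\,x^k .$$ *)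

From HB Require Import structures.
From mathcomp Require Import all_boot all_order all_algebra.
From mathcomp Require Import reals.
From Stdlib Require Import ClassicalEpsilon.
Set Implicit Arguments. Unset Strict Implicit. Unset Printing Implicit Defensive.
Import Order.TTheory GRing.Theory Num.Theory.
Local Open Scope ring_scope.

Definition gfpoly (R : realType) (c b : R) (k : nat) : {poly R} :=
  \prod_(j < k) ('X - (c + j%:R * b)%:P).

Definition stirling_spec (R : realType) (n : nat) (a b g : R) (c : nat -> R) : Prop :=
  gfpoly 0 a n = \sum_(k < n.+1) c k *: gfpoly g b k.

Definition gstirling (R : realType) (n k : nat) (a b g : R) : R :=
  epsilon (inhabits (fun _ : nat => (0 : R))) (stirling_spec n a b g) k.

(* binom(k+lam-1, k) = lam(lam+1)...(lam+k-1)/k! *)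
Definition risebin (R : realType) (lam k : nat) : R :=
  (\prod_(i < k) (lam + i)%:R) / (k`!)%:R.

Definition Apoly (R : realType) (n lam : nat) (x a b g : R) : R :=
  \sum_(k < n.+1) risebin R lam k * (-1) ^+ (n + k) * b ^+ k * (k`!)%:R
                  * gstirling n k a (- b) (- g) * x ^+ k.

From HB Require Import structures.
From mathcomp Require Import all_boot all_order all_algebra.
From mathcomp Require Import reals ring.
From Stdlib Require Import ClassicalEpsilon.
Set Implicit Arguments. Unset Strict Implicit. Unset Printing Implicit Defensive.
Import Order.TTheory GRing.Theory Num.Theory.
Local Open Scope ring_scope.

(* Newton's forward-difference formula identifies k! b^k S(n,k,a,b,g) with the
   k-th forward difference, of step b, of t |-> (t|a)_n at g.  Hence, writing D for
   the difference of step -b,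
     A_n^{lam,x}(a,b,g) = (-1)^n sum_k [z^k] (1-z)^(-lam) x^k (D^k (t|a)_n)(-g),
   where (1-z)^(-lam) may be truncated to (1 + z + ... + z^n)^lam.  The factorials
   (t|a)_n are of binomial type, (u+v|a)_n = sum_m C(n,m) (u|a)_m (v|a)_(n-m), and
   differences in u and in v add up to differences in u+v; so the binomial
   convolution of such series in z is their product, and the exponents lam add up. *)

Section FiniteDifferences.
Variables (R : comPzRingType) (B : R).

Fixpoint fdiff (k : nat) (f : R -> R) (t : R) : R :=
  if k is k'.+1 then fdiff k' f (t + B) - fdiff k' f t else f t.

Lemma eq_fdiff k (f g : R -> R) : f =1 g -> fdiff k f =1 fdiff k g.
Proof. by move=> efg; elim: k => [|k IHk] t //=; rewrite !IHk. Qed.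

Lemma fdiffSr k f : fdiff k.+1 f =1 fdiff k (fun s => f (s + B) - f s).
Proof. by elim: k => [|k IHk] t //=; rewrite -!IHk. Qed.

Lemma fdiff_cst0 k : fdiff k (fun=> 0) =1 (fun=> 0).
Proof. by elim: k => [|k IHk] t //=; rewrite !IHk subrr. Qed.

Lemma fdiffZ k c f : fdiff k (fun s => c * f s) =1 (fun t => c * fdiff k f t).
Proof. by elim: k => [|k IHk] t //=; rewrite !IHk mulrBr. Qed.

Lemma fdiff_sum (I : finType) k (c : I -> R) (f : I -> R -> R) :
  fdiff k (fun s => \sum_i c i * f i s) =1 (fun t => \sum_i c i * fdiff k (f i) t).
Proof.
elim: k => [|k IHk] t //=; rewrite !IHk -sumrB.
by apply: eq_bigr => i _; rewrite mulrBr.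
Qed.

Lemma fdiff_split (I : finType) (c : I -> R) (f g : I -> R -> R) (h : R -> R) :
    (forall u v, h (u + v) = \sum_i c i * f i u * g i v) ->
  forall k1 k2 u v,
    fdiff (k1 + k2) h (u + v) = \sum_i c i * fdiff k1 (f i) u * fdiff k2 (g i) v.
Proof.
move=> h_split; elim=> [|k1 IHk1] k2 u v.
  elim: k2 u v => [|k2 IHk2] u v; first exact: h_split.
  rewrite add0n /= -addrA -(add0n k2) !IHk2 -sumrB.
  by apply: eq_bigr => i _; rewrite mulrBr.
rewrite addSn /= (addrAC u v B) !IHk1 -sumrB.
by apply: eq_bigr => i _; rewrite mulrBr mulrBl.
Qed.

End FiniteDifferences.

Section GeneralisedFactorials.
Variables (R : comPzRingType) (c : R).

(* [gfact c G m t] is (t - G | c)_m; the paper's (t|a)_n is [gfact a 0 n t]. *)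
Definition gfact (G : R) (m : nat) (t : R) : R := \prod_(i < m) (t - (G + i%:R * c)).

Lemma gfactS G m t : gfact G m.+1 t = gfact G m t * (t - (G + m%:R * c)).
Proof. by rewrite /gfact big_ord_recr. Qed.

Lemma sum_binS (F : nat -> nat -> R) n :
  \sum_(m < n.+2) 'C(n.+1, m)%:R * F m (n.+1 - m)%N
  = \sum_(m < n.+1) 'C(n, m)%:R * (F m.+1 (n - m)%N + F m (n - m)%N.+1).
Proof.
rewrite big_ord_recl /= bin0 subn0 mul1r.
under eq_bigr => i _ do rewrite /bump /= add1n binS natrD mulrDl subSS.
under [RHS]eq_bigr => i _ do rewrite mulrDr.
rewrite !big_split /= [X in _ = _ + X]big_ord_recl /= bin0 subn0 mul1r.
rewrite [X in _ + (X + _) = _]big_ord_recr /= bin_small // mul0r addr0.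
under [X in _ = _ + (_ + X)]eq_bigr => i _ do rewrite /bump /= add1n subnSK //.
by rewrite addrA addrC.
Qed.

Lemma gfact_vandermonde n u v :
  gfact 0 n (u + v) = \sum_(m < n.+1) 'C(n, m)%:R * gfact 0 m u * gfact 0 (n - m)%N v.
Proof.
elim: n => [|n IHn]; first by rewrite big_ord1 /gfact !big_ord0 !mulr1.
rewrite gfactS IHn mulr_suml.
under [RHS]eq_bigr => m _ do rewrite -mulrA.
rewrite (sum_binS (fun i j => gfact 0 i u * gfact 0 j v)).
apply: eq_bigr => m _; rewrite !gfactS.
have -> : n%:R = m%:R + (n - m)%:R :> R by rewrite -natrD subnKC // -ltnS.
ring.
Qed.

Lemma fdiff_gfact_vandermonde B n k1 k2 u v :
  fdiff B (k1 + k2) (gfact 0 n) (u + v)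
  = \sum_(m < n.+1) 'C(n, m)%:R * fdiff B k1 (gfact 0 m) u
                                * fdiff B k2 (gfact 0 (n - m)%N) v.
Proof.
exact: (fdiff_split B (c := fun m : 'I_n.+1 => 'C(n, m)%:R) (f := fun m => gfact 0 m)
  (g := fun m => gfact 0 (n - m)%N) (gfact_vandermonde n)).
Qed.

Lemma gfact_diff G j t :
  gfact G j.+1 (t + c) - gfact G j.+1 t = j.+1%:R * c * gfact G j t.
Proof.
rewrite /gfact big_ord_recl big_ord_recr /=.
have shift (i : 'I_j) : t + c - (G + (bump 0 i)%:R * c) = t - (G + i%:R * c).
  by rewrite /bump /= add1n mulrS; ring.
by rewrite (eq_bigr _ (fun i _ => shift i)) mulrS; ring.
Qed.

Lemma gfact_base G j : gfact G j G = (j == 0)%:R.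
Proof.
case: j => [|j]; first by rewrite /gfact big_ord0.
by rewrite /gfact big_ord_recl /= mul0r addr0 subrr mul0r.
Qed.

Lemma fdiff_gfact G k j :
  fdiff c k (gfact G j) G = if k == j then k`!%:R * c ^+ k else 0.
Proof.
elim: k j => [|k IHk] [|j]; rewrite ?fdiffSr /= ?gfact_base ?expr0 ?mulr1 //.
  rewrite (@eq_fdiff _ c k _ (fun=> 0)) ?fdiff_cst0 // => s.
  by rewrite /gfact !big_ord0 subrr.
rewrite (eq_fdiff c k (fun s => gfact_diff G j s)) fdiffZ IHk eqSS.
by case: eqP => [->|]; rewrite ?mulr0 // factS natrM exprS; ring.
Qed.

Lemma fdiff_newton G m (d : nat -> R) (f : R -> R) k :
    (forall t, f t = \sum_(j < m.+1) d j * gfact G j t) ->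
  fdiff c k f G = if (k < m.+1)%N then d k * (k`!%:R * c ^+ k) else 0.
Proof.
move=> f_exp; rewrite (eq_fdiff c k f_exp) fdiff_sum.
under eq_bigr => j _ do rewrite fdiff_gfact eq_sym (fun_if (fun y => d j * y)) mulr0.
by rewrite -big_mkcond /= (big_ord1_eq _ (fun j => d j * (k`!%:R * c ^+ k))).
Qed.

End GeneralisedFactorials.

Section GeneralisedStirlingNumbers.
Variable R : realType.

Lemma horner_gfpoly (G c : R) j t : (gfpoly G c j).[t] = gfact c G j t.
Proof. by rewrite horner_prod; apply: eq_bigr => i _; rewrite hornerXsubC. Qed.

Lemma size_gfpoly (G c : R) k : size (gfpoly G c k) = k.+1.
Proof. by rewrite size_prod_XsubC -[k in RHS]card_ord cardE enumT. Qed.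

Lemma gfpoly_monic (G c : R) k : gfpoly G c k \is monic.
Proof. exact: monic_prod_XsubC. Qed.

Lemma gfpoly_basis (G c : R) n (p : {poly R}) : (size p <= n.+1)%N ->
  exists d : nat -> R, p = \sum_(k < n.+1) d k *: gfpoly G c k.
Proof.
elim: n p => [|n IHn] p size_p.
  exists (fun=> p`_0); rewrite big_ord1 /gfpoly big_ord0 alg_polyC.
  exact: size1_polyC.
set q := p - p`_n.+1 *: gfpoly G c n.+1.
have size_q : (size q <= n.+1)%N.
  apply/leq_sizeP => j le_n1_j; rewrite coefB coefZ.
  case: (ltngtP j n.+1) => [|lt_n1_j|->]; first by rewrite ltnNge le_n1_j.
    have size_p_j : (size p <= j)%N by apply: leq_trans size_p _.
    have size_g_j : (size (gfpoly G c n.+1) <= j)%N by rewrite size_gfpoly.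
    by rewrite (nth_default _ size_p_j) (nth_default _ size_g_j) mulr0 subrr.
  have /monicP := gfpoly_monic G c n.+1.
  by rewrite lead_coefE size_gfpoly /= => ->; rewrite mulr1 subrr.
have [d def_q] := IHn q size_q.
exists (fun k => if k == n.+1 then p`_n.+1 else d k).
rewrite big_ord_recr /= eqxx (eq_bigr (fun k : 'I_n.+1 => d k *: gfpoly G c k)).
  by rewrite -def_q /q subrK.
by move=> k _; rewrite ltn_eqF.
Qed.

Lemma gstirlingP m (a c G : R) : stirling_spec m a c G (fun k => gstirling m k a c G).
Proof.
apply: (epsilon_spec _ (stirling_spec m a c G)).
by apply: gfpoly_basis; rewrite size_gfpoly.
Qed.

Lemma fdiff_gfact_stirling m k (a c G : R) :
  fdiff c k (gfact a 0 m) G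
  = if (k < m.+1)%N then gstirling m k a c G * (k`!%:R * c ^+ k) else 0.
Proof.
apply: fdiff_newton => t.
rewrite -horner_gfpoly (gstirlingP m a c G) horner_sum.
by apply: eq_bigr => j _; rewrite hornerZ horner_gfpoly.
Qed.

Lemma fdiff_gfact_eq0 m k (a c t : R) : (m < k)%N -> fdiff c k (gfact a 0 m) t = 0.
Proof. by move=> lt_m_k; rewrite fdiff_gfact_stirling ltnS leqNgt lt_m_k. Qed.

End GeneralisedStirlingNumbers.

Section RisingBinomials.
Variable R : realType.

Lemma risebin0 lam : risebin R lam 0 = 1.
Proof. by rewrite /risebin big_ord0 divr1. Qed.

Lemma risebin0S k : risebin R 0 k.+1 = 0.
Proof. by rewrite /risebin big_ord_recl !mul0r. Qed.

Lemma risebinS lam k :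
  risebin R lam.+1 k.+1 = risebin R lam.+1 k + risebin R lam k.+1.
Proof.
rewrite /risebin [in LHS]big_ord_recr [in X in _ = _ + X]big_ord_recl /=.
under [in X in _ = _ + X]eq_bigr => i _ do rewrite /bump /= add1n addnS.
have fact_neq0 : k`!%:R != 0 :> R by rewrite pnatr_eq0 -lt0n fact_gt0.
have kS_neq0 : k.+1%:R != 0 :> R by rewrite pnatr_eq0.
rewrite factS natrM addn0 !natrD; rewrite mulrS in kS_neq0 *.
by field; rewrite fact_neq0 kS_neq0.
Qed.

Lemma risebinS_sum lam k : risebin R lam.+1 k = \sum_(j < k.+1) risebin R lam j.
Proof.
elim: k => [|k IHk]; first by rewrite big_ord1 !risebin0.
by rewrite big_ord_recr /= -IHk risebinS.
Qed.

Lemma coef_geom_exp N lam k :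
  (k < N)%N -> ((\poly_(i < N) (1 : R)) ^+ lam)`_k = risebin R lam k.
Proof.
elim: lam k => [|lam IHlam] k lt_k_N.
  by rewrite expr0 coef1; case: k lt_k_N => [|k] _; rewrite ?risebin0 ?risebin0S.
rewrite exprSr coefM risebinS_sum; apply: eq_bigr => j _.
have lt_j_N : (j < N)%N by apply: leq_ltn_trans lt_k_N; rewrite -ltnS.
have lt_kj_N : (k - j < N)%N by apply: leq_ltn_trans (leq_subr _ _) lt_k_N.
by rewrite IHlam // coef_poly lt_kj_N mulr1.
Qed.

End RisingBinomials.

Section DifferenceSeries.
Variables (R : realType) (a c x : R) (N : nat).

(* Truncating at N is harmless once m < N: the k-th differences of (t|a)_m
   vanish for k > m. *)
Definition diff_series m (r : {poly R}) t : R :=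
  \sum_(k < N) r`_k * x ^+ k * fdiff c k (gfact a 0 m) t.

Lemma diff_series_monomials (I : finType) (d : I -> R) (e : I -> nat) m t :
    (m < N)%N ->
  diff_series m (\sum_i d i *: 'X^(e i)) t
  = \sum_i d i * x ^+ e i * fdiff c (e i) (gfact a 0 m) t.
Proof.
move=> lt_m_N; rewrite /diff_series.
under eq_bigr => k _ do rewrite coef_sum !mulr_suml.
rewrite exchange_big; apply: eq_bigr => i _ /=.
rewrite (eq_bigr (fun k : 'I_N => if k == e i :> nat
    then d i * x ^+ e i * fdiff c (e i) (gfact a 0 m) t else 0)) => [|k _]; last first.
  by rewrite coefZ coefXn; case: eqP => [->|_]; rewrite ?mulr1 ?mulr0 ?mul0r.
rewrite -big_mkcond (big_ord1_eq _ (fun=> d i * x ^+ e i * fdiff c (e i) (gfact a 0 m) t)).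
case: ltnP => // le_N_e.
by rewrite fdiff_gfact_eq0 ?mulr0 // (leq_trans lt_m_N le_N_e).
Qed.

Lemma diff_series_binomial n (p q : {poly R}) u v : (n < N)%N ->
  \sum_(m < n.+1) 'C(n, m)%:R * diff_series m p u * diff_series (n - m)%N q v
  = diff_series n (p * q) (u + v).
Proof.
move=> lt_n_N.
have monomials (r : {poly R}) m t : (m < N)%N ->
    diff_series m r t = \sum_(i < size r) r`_i * x ^+ i * fdiff c i (gfact a 0 m) t.
  by move=> lt_m_N; rewrite -{1}[r]coefK poly_def diff_series_monomials.
have -> : p * q = \sum_(ij : 'I_(size p) * 'I_(size q))
                    (p`_ij.1 * q`_ij.2) *: 'X^(ij.1 + ij.2).
  rewrite -{1}[p]coefK -{1}[q]coefK !poly_def big_distrlr pair_big /=.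
  by apply: eq_bigr => ij _; rewrite -scalerAl -scalerAr scalerA exprD.
rewrite diff_series_monomials //.
under [RHS]eq_bigr => ij _ do rewrite fdiff_gfact_vandermonde mulr_sumr.
rewrite exchange_big; apply: eq_bigr => m _ /=.
rewrite !monomials ?(leq_ltn_trans (leq_subr m n)) ?(leq_ltn_trans (leq_ord m)) //.
rewrite -mulrA big_distrlr pair_big mulr_sumr /=.
by apply: eq_bigr => ij _; rewrite exprD; ring.
Qed.

End DifferenceSeries.

Lemma Apoly_diff_series (R : realType) N m lam (x a b g : R) : (m < N)%N ->
  Apoly m lam x a b g
  = (-1) ^+ m * diff_series a (- b) x N m ((\poly_(i < N) 1) ^+ lam) (- g).
Proof.
move=> lt_m_N; rewrite /Apoly /diff_series mulr_sumr.
rewrite (big_ord_widen N (fun k => risebin R lam k * (-1) ^+ (m + k) * b ^+ k * k`!%:R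
                                   * gstirling m k a (- b) (- g) * x ^+ k) lt_m_N).
rewrite big_mkcond; apply: eq_bigr => k _; case: ltnP => [lt_k_m1|lt_m_k].
  rewrite coef_geom_exp ?(leq_trans lt_k_m1) // fdiff_gfact_stirling lt_k_m1.
  by rewrite exprD (exprNn b); ring.
by rewrite (fdiff_gfact_eq0 a (- b) (- g) lt_m_k) !mulr0.
Qed.

Theorem theorem10 (R : realType) (a b g1 g2 x : R) (l1 l2 n : nat) :
  \sum_(k < n.+1) ('C(n, k))%:R * Apoly k l1 x a b (a + b + g1)
                                * Apoly (n - k) l2 x a b g2
  = Apoly n (l1 + l2) x a b (a + b + g1 + g2).
Proof.
pose S := \poly_(i < n.+1) (1 : R).
pose F m lam g := diff_series a (- b) x n.+1 m (S ^+ lam) (- g).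
have separate_signs (m : 'I_n.+1) :
    'C(n, m)%:R * Apoly m l1 x a b (a + b + g1) * Apoly (n - m) l2 x a b g2
    = (-1) ^+ n * ('C(n, m)%:R * F m l1 (a + b + g1) * F (n - m)%N l2 g2).
  have lt_nm_n1 : (n - m < n.+1)%N by rewrite ltnS leq_subr.
  have -> : (-1) ^+ n = (-1) ^+ m * (-1) ^+ (n - m) :> R.
    by rewrite -exprD subnKC // -ltnS.
  by rewrite !(Apoly_diff_series (N := n.+1)) // /F /S; ring.
rewrite (eq_bigr _ (fun m _ => separate_signs m)) -mulr_sumr diff_series_binomial //.
by rewrite -exprD -opprD (Apoly_diff_series (N := n.+1)).
Qed.
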